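(* Consider a black-white array (BWA) currently storing $n$ values, i.e. with state variable $\mathtt{total}=n$, and suppose $n$ is $k$-trailed. Then inserting one more value into the BWA causes exactly $k$ recursive merges, namely $\mathrm{merge}(0),\mathrm{merge}(1),\dots,\mathrm{merge}(k-1)$.
   Context: A black-white array (BWA) of size $N=2^K$ stores values from a totally ordered set. It has a white array $W[1..N-1]$ and a black array $B[1..N/2-1]$. For $i\ge 0$, the segment of rank $i$ of either array is the block of indices $[2^i,2^{i+1}-1]$, so it has length $2^i$. An integer state variable $\mathtt{total}$ records the number of stored values and is initially $0$. The segment of rank $i$ is called active iff bit $i$ of $\mathtt{total}$ equals $1$ (bits counted from the least significant bit, which is bit $0$). Between operations, all stored values are held in the active white segments, and each active white segment is sorted in ascending order. Insert$(v)$: if the rank-0 segment is inactive, set $W[1]=v$; otherwise set $B[1]=v$ and perform $\mathrm{merge}(0)$. $\mathrm{merge}(i)$: merge the sorted white and black segments of rank $i$ by a standard two-way merge. If the rank-$(i+1)$ segment is inactive, the sorted result is written into the white segment of rank $i+1$. Otherwise it is written into the black segment of rank $i+1$, and then $\mathrm{merge}(i+1)$ is performed. When an insertion completes, $\mathtt{total}$ has increased by one. A nonnegative integer $n$ is $k$-trailed if its binary expansion has the form $[b_{m-1},\dots,b_{k+1},0,\underbrace{1,\dots,1}_{k}]$, i.e. its $k$ lowest bits are $1$ and bit $k$ is $0$. Every even number is $0$-trailed. *)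

From mathcomp Require Import all_boot all_order.
Set Implicit Arguments. Unset Strict Implicit. Unset Printing Implicit Defensive.
Import Order.TTheory.
Local Open Scope order_scope.

Section BWA.
Context {disp : Order.disp_t} {T : orderType disp}.

(* Arrays are modelled as total functions nat -> T (indices 1..N-1 used). *)
Record bwa := BWA { W : nat -> T; B : nat -> T; bwa_total : nat }.

Definition bit (n i : nat) : bool := odd (n %/ 2 ^ i).

Definition active (t i : nat) : bool := bit t i.

Definition seg (A : nat -> T) (i : nat) : seq T :=
  [seq A (2 ^ i + j) | j <- iota 0 (2 ^ i)].

Definition write (A : nat -> T) (i : nat) (s : seq T) : nat -> T :=
  fun x => if (2 ^ i <= x) && (x < 2 ^ i.+1) then nth (A x) s (x - 2 ^ i) else A x.

(* merge(i): returns the new arrays and the list of ranks j for which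
   merge(j) was performed (in order).  [t] is the value of total, which is
   only updated once the insertion completes.  [fuel] bounds the recursion
   depth (K suffices for a BWA of size 2^K). *)
Fixpoint merge_rec (fuel i : nat) (Wa Ba : nat -> T) (t : nat)
  : (nat -> T) * (nat -> T) * seq nat :=
  let m := merge <=%O (seg Wa i) (seg Ba i) in
  if active t i.+1 then
    match fuel with
    | 0 => (Wa, write Ba i.+1 m, [:: i])
    | f.+1 =>
        let: (W', B', tr) := merge_rec f i.+1 Wa (write Ba i.+1 m) t in
        (W', B', i :: tr)
    end
  else (write Wa i.+1 m, Ba, [:: i]).

(* Insert(v) on a BWA of size N = 2^K: returns the new state and the
   sequence of ranks of merges performed. *)
Definition insert (K : nat) (s : bwa) (v : T) : bwa * seq nat :=
  let t := bwa_total s in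
  if ~~ active t 0 then (BWA (write (W s) 0 [:: v]) (B s) t.+1, [::])
  else
    let: (W', B', tr) := merge_rec K 0 (W s) (write (B s) 0 [:: v]) t in
    (BWA W' B' t.+1, tr).

(* Between operations: all active white segments are sorted, and the
   number of stored values fits in W[1..N-1]. *)
Definition bwa_valid (K : nat) (s : bwa) : Prop :=
  bwa_total s <= 2 ^ K - 1 /\
  forall i, active (bwa_total s) i -> sorted <=%O (seg (W s) i).

End BWA.

Definition k_trailed (n k : nat) : Prop :=
  (forall i, i < k -> bit n i) /\ ~~ bit n k.

(* The merges performed by an insertion are dictated by the bits of total
   alone: merge(i) cascades into merge(i+1) exactly when bit i+1 is set.  For
   a k-trailed total, bit 0 is set iff k > 0, bits 1..k-1 are set and bit k is
   clear, so the cascade runs through ranks 0..k-1.  The bound on total makes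
   2^k <= total + 1 < 2^K, so the recursion depth K never cuts it short. *)
From mathcomp Require Import all_boot all_order.
From mathcomp Require Import zify.

Lemma bit0 n : bit n 0 = odd n.
Proof. by rewrite /bit expn0 divn1. Qed.

Lemma bitS n i : bit n i.+1 = bit n./2 i.
Proof. by rewrite /bit expnS divnMA -divn2. Qed.

Lemma low_bits_set_expn_leq m n :
  (forall i, i < m -> bit n i) -> 2 ^ m <= n.+1.
Proof.
elim: m n => [|m IHm] n low_set; first by rewrite expn0.
have odd_n : odd n by rewrite -bit0; apply: low_set.
have half_ge : 2 ^ m <= n./2.+1.
  by apply: IHm => i lt_im; rewrite -bitS; apply: low_set.
rewrite -[n](odd_double_half n) odd_n expnS -muln2; lia.
Qed.

Section MergeRanks.
Context {disp : Order.disp_t} {T : orderType disp}.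
Implicit Types (Wa Ba : nat -> T).

Lemma merge_rec_ranks_inactive fuel i Wa Ba t :
  ~~ active t i.+1 -> (merge_rec fuel i Wa Ba t).2 = [:: i].
Proof. by move/negbTE=> inactive; case: fuel => [|f] /=; rewrite inactive. Qed.

Lemma merge_rec_ranks_active f i Wa Ba t :
  active t i.+1 ->
  (merge_rec f.+1 i Wa Ba t).2 =
    i :: (merge_rec f i.+1 Wa (write Ba i.+1 (merge <=%O (seg Wa i) (seg Ba i))) t).2.
Proof. by move=> /= ->; case: merge_rec => [[]]. Qed.

Lemma merge_rec_ranks j fuel i Wa Ba t :
  j <= fuel -> (forall l, l < j -> bit t (i + l.+1)) -> ~~ bit t (i + j.+1) ->
  (merge_rec fuel i Wa Ba t).2 = iota i j.+1.
Proof.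
elim: j fuel i Ba => [|j IHj] fuel i Ba le_j_fuel set_below clear_top.
  by rewrite merge_rec_ranks_inactive // -addn1.
case: fuel le_j_fuel => [//|f] le_j_f.
rewrite merge_rec_ranks_active; last by rewrite /active -addn1; apply: set_below.
rewrite (IHj f i.+1) //.
- by move=> l lt_lj; rewrite addSnnS; apply: set_below.
- by rewrite addSnnS.
Qed.

Lemma insert_ranks_inactive K (s : @bwa disp T) (v : T) :
  ~~ active (bwa_total s) 0 -> (insert K s v).2 = [::].
Proof. by rewrite /insert => ->. Qed.

Lemma insert_ranks_active K (s : @bwa disp T) (v : T) :
  active (bwa_total s) 0 ->
  (insert K s v).2 = (merge_rec K 0 (W s) (write (B s) 0 [:: v]) (bwa_total s)).2.
Proof. by rewrite /insert => ->; case: merge_rec => [[]]. Qed.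

End MergeRanks.

Theorem mainTheorem1 (disp : Order.disp_t) (T : orderType disp)
  (K : nat) (s : @bwa disp T) (v : T) (n k : nat) :
  bwa_valid K s ->
  bwa_total s = n ->
  n.+1 <= 2 ^ K - 1 ->
  k_trailed n k ->
  (insert K s v).2 = iota 0 k.
Proof.
move=> _ total_n n_small [set_below clear_k].
case: k set_below clear_k => [|k] set_below clear_k.
  by rewrite insert_ranks_inactive // total_n.
have lt_Sk_K : k.+1 < K.
  rewrite -(ltn_exp2l _ _ (ltnSn 1)).
  apply: leq_ltn_trans (@low_bits_set_expn_leq k.+1 n set_below) _; lia.
rewrite insert_ranks_active total_n; last exact: set_below.
by apply: merge_rec_ranks => [|l lt_lk|//]; [apply/ltnW/ltnW | apply: set_below].
Qed.
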